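(* Let $f_0,\ldots,f_{k-1}$, $k\ge2$, be diffeomorphisms of $S^n$ generating a minimal iterated function system, where $f_0$ is a north–south diffeomorphism with hyperbolic repelling fixed point $P_0$. Let $m$ be a stationary measure for the iterated function system with probabilities $p_0,\ldots,p_{k-1}$. Then $m(\{P_0\})=0$.
   Context: A north–south diffeomorphism of $S^n$ has a hyperbolic repelling fixed point $P_0$ and a hyperbolic attracting fixed point $Q_0$ whose basin of attraction is $S^n\setminus\{P_0\}$. The iterated function system is minimal if for every $x\in S^n$ some sequence $x_0=x$, $x_{j+1}=f_{i_j}(x_j)$ is dense in $S^n$. Given probabilities $p_i\in(0,1)$ with $\sum p_i=1$, a stationary measure is a Borel probability measure $m$ with $m=\sum_i p_i f_i m$, where $f_im(A)=m(f_i^{-1}(A))$. *)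

From HB Require Import structures.
From mathcomp Require Import all_boot all_order all_algebra.
From mathcomp Require Import all_classical all_reals all_analysis.
Set Implicit Arguments. Unset Strict Implicit. Unset Printing Implicit Defensive.
Import Order.TTheory GRing.Theory Num.Theory.
Import numFieldNormedType.Exports.
Local Open Scope classical_set_scope.
Local Open Scope ring_scope.

(* Ambient space R^{n+1}, realised as row vectors 'rV[R]_(n.+1).
   (Its normed topology is the usual topology of R^{n+1}.) *)
Notation Rn1 R n := 'rV[R]_(n.+1).

Definition dotv {R : realType} {n : nat} (x y : Rn1 R n) : R :=
  \sum_(i < n.+1) x ord0 i * y ord0 i.

Definition unit_sph (R : realType) (n : nat) : set (Rn1 R n) :=
  [set x | dotv x x = 1].
Arguments unit_sph : clear implicits.

Definition tangent {R : realType} {n : nat} (P : Rn1 R n) : set (Rn1 R n) :=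
  [set v | dotv P v = 0].

Fixpoint iterD {R : realType} {n : nat} (vs : seq (Rn1 R n))
    (g : Rn1 R n -> Rn1 R n) : Rn1 R n -> Rn1 R n :=
  match vs with
  | [::] => g
  | v :: vs' => fun x => 'd (iterD vs' g) x v
  end.

Definition smooth_on {R : realType} {n : nat} (U : set (Rn1 R n))
    (g : Rn1 R n -> Rn1 R n) : Prop :=
  forall (vs : seq (Rn1 R n)) x, U x -> differentiable (iterD vs g) x.

Definition smooth_ext {R : realType} {n : nat} (f F : Rn1 R n -> Rn1 R n) :=
  exists U : set (Rn1 R n), [/\ open U, unit_sph R n `<=` U, smooth_on U F &
    forall x, unit_sph R n x -> F x = f x].

Definition sph_smooth {R : realType} {n : nat} (f : Rn1 R n -> Rn1 R n) :=
  (forall x, unit_sph R n x -> unit_sph R n (f x)) /\ exists F, smooth_ext f F.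

(* Diffeomorphism of S^n (only the values of f on S^n matter). *)
Definition sph_diffeo {R : realType} {n : nat} (f : Rn1 R n -> Rn1 R n) :=
  sph_smooth f /\ exists g : Rn1 R n -> Rn1 R n, [/\ sph_smooth g,
    (forall x, unit_sph R n x -> g (f x) = x) &
    (forall x, unit_sph R n x -> f (g x) = x)].

(* (a + i b) is a (complex) eigenvalue of the real linear map L restricted
   to the tangent space T_P S^n, with eigenvector u + i w (u, w in T_P S^n,
   not both zero), i.e. L(u + i w) = (a + i b)(u + i w). *)
Definition tangent_eigen {R : realType} {n : nat} (P : Rn1 R n)
    (L : Rn1 R n -> Rn1 R n) (a b : R) : Prop :=
  exists u w, [/\ tangent P u, tangent P w, (u != 0) || (w != 0),
    L u = a *: u - b *: w & L w = b *: u + a *: w].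

Definition hyp_repelling {R : realType} {n : nat} (f : Rn1 R n -> Rn1 R n)
    (P : Rn1 R n) : Prop :=
  [/\ unit_sph R n P, f P = P &
    exists F, smooth_ext f F /\
      forall a b, tangent_eigen P ('d F P) a b -> 1 < a ^+ 2 + b ^+ 2].

Definition hyp_attracting {R : realType} {n : nat} (f : Rn1 R n -> Rn1 R n)
    (P : Rn1 R n) : Prop :=
  [/\ unit_sph R n P, f P = P &
    exists F, smooth_ext f F /\
      forall a b, tangent_eigen P ('d F P) a b -> a ^+ 2 + b ^+ 2 < 1].

Definition north_south {R : realType} {n : nat} (f : Rn1 R n -> Rn1 R n)
    (P0 Q0 : Rn1 R n) : Prop :=
  [/\ sph_diffeo f, hyp_repelling f P0, hyp_attracting f Q0 &
    forall x, unit_sph R n x ->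
      ((fun j => iter j f x) @ \oo --> Q0 <-> x <> P0)].

Fixpoint ifs_orbit {R : realType} {n k : nat} (f : 'I_k -> Rn1 R n -> Rn1 R n)
    (x : Rn1 R n) (s : nat -> 'I_k) (j : nat) : Rn1 R n :=
  match j with
  | 0 => x
  | j'.+1 => f (s j') (ifs_orbit f x s j')
  end.

Definition ifs_minimal {R : realType} {n k : nat}
    (f : 'I_k -> Rn1 R n -> Rn1 R n) : Prop :=
  forall x, unit_sph R n x -> exists s : nat -> 'I_k,
    unit_sph R n `<=` closure (range (ifs_orbit f x s)).

Definition BorelRn (R : realType) (n : nat) :=
  g_sigma_algebraType (@open (Rn1 R n)).
Arguments BorelRn : clear implicits.

(* m is a stationary Borel probability measure on S^n: a Borel probability on
   R^{n+1} carried by S^n with m(A) = sum_i p_i m(f_i^{-1}(A)) (preimages taken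
   inside S^n) for every Borel A. *)
Definition stationary {R : realType} {n k : nat}
    (f : 'I_k -> Rn1 R n -> Rn1 R n) (p : 'I_k -> R)
    (m : probability (BorelRn R n) R) : Prop :=
  m (unit_sph R n) = 1%E /\
  forall A : set (BorelRn R n), measurable A ->
    m A = (\sum_(i < k) (p i)%:E * m (unit_sph R n `&` f i @^-1` A))%E.

(* If P0 were an atom of m, look at the atoms of maximal mass: there are
   finitely many of them since m has total mass 1.  Stationarity makes the mass
   of a point the p-average of the masses of its preimages under the f_i, so the
   preimages of a maximal atom are maximal atoms again.  The finite set of
   maximal atoms is thus mapped into itself by the inverses of the f_i, hence,
   being finite, by the f_i themselves; by minimality it then contains the whole
   sphere, which is infinite. *)

From HB Require Import structures.
From mathcomp Require Import all_boot all_order all_algebra.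
From mathcomp Require Import finmap.
From mathcomp Require Import all_classical all_reals all_analysis.
Import Order.TTheory GRing.Theory Num.Theory.
Import numFieldNormedType.Exports.
Local Open Scope classical_set_scope.
Local Open Scope ring_scope.

Set Implicit Arguments.
Unset Strict Implicit.
Unset Printing Implicit Defensive.

Lemma seq_argmax (R : realDomainType) (T : eqType) (F : T -> R) (s : seq T) :
  s != [::] -> exists2 x, x \in s & forall y, y \in s -> F y <= F x.
Proof.
elim: s => // a [|b s] IH _.
  by exists a => [|y]; rewrite ?mem_head // inE => /eqP ->.
have [x xs x_max] := IH isT.
have [Fxa|Fax] := leP (F x) (F a).
  exists a => [|y]; first exact: mem_head.
  by rewrite inE => /predU1P [->//|/x_max/le_trans]; apply.
exists x => [|y]; first by rewrite inE xs orbT.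
by rewrite inE => /predU1P [->|/x_max//]; apply: ltW.
Qed.

Lemma convex_comb_eq_max (R : numDomainType) (k : nat) (p a : 'I_k -> R) (M : R) :
  (forall i, 0 < p i) -> \sum_i p i = 1 -> (forall i, a i <= M) ->
  \sum_i p i * a i = M -> forall i, a i = M.
Proof.
move=> p_gt0 p_sum1 a_le comb_eq i.
have gap_sum0 : \sum_j p j * (M - a j) = 0.
  under eq_bigr do rewrite mulrBr.
  by rewrite sumrB -mulr_suml p_sum1 mul1r comb_eq subrr.
have gap_ge0 j : true -> 0 <= p j * (M - a j).
  by move=> _; apply: mulr_ge0; [exact: ltW | rewrite subr_ge0].
move/eqP: (psumr_eq0P gap_ge0 gap_sum0 (i := i) isT).
by rewrite mulf_eq0 gt_eqF //= subr_eq0 => /eqP.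
Qed.

Lemma sub_map_inj_in (T : eqType) (h : T -> T) (s : seq T) :
  {in s &, injective h} -> {subset map h s <= s} -> {subset s <= map h s}.
Proof.
move=> h_inj hs_s.
have h_inj' : {in undup s &, injective h}.
  by move=> x y; rewrite !mem_undup; apply: h_inj.
have uniq_hs : uniq (map h (undup s)) by rewrite map_inj_in_uniq ?undup_uniq.
have sub_hs : {subset map h (undup s) <= undup s}.
  move=> y; rewrite mem_undup => /mapP [x xs ->].
  by apply/hs_s/map_f; rewrite -mem_undup.
have [_ eq_hs] := uniq_min_size uniq_hs sub_hs (eq_leq (esym (size_map _ _))).
move=> x; rewrite -mem_undup -eq_hs => /mapP [y ys ->].
by apply: map_f; rewrite -mem_undup.
Qed.

Section MaximalWeights.
Variables (R : realType) (T : choiceType) (S : set T) (w : T -> R).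
Hypothesis w_fsum_le1 :
  forall B : {fset T}, [set` B] `<=` S -> \sum_(x <- B) w x <= 1.

Lemma finite_superlevel (c : R) : 0 < c -> finite_set [set x | S x /\ c <= w x].
Proof.
move=> c_gt0; apply: contrapT.
move=> /(infinite_set_fset (Num.truncn c^-1).+1) [B BS]; apply/negP.
rewrite -leqNgt truncn_ge_nat ?invr_ge0 ?(ltW c_gt0) //.
have B_sub : [set` B] `<=` S by move=> x /BS [].
have sum_ge : c *+ #|` B| <= \sum_(x <- B) w x.
  rewrite -iter_addr_0 -(count_predT B) -big_const_seq !big_seq.
  by apply: ler_sum => x /BS [].
rewrite -(ler_pM2r c_gt0) mulVf ?gt_eqF // mulr_natl.
exact: le_trans sum_ge (w_fsum_le1 B_sub).
Qed.

Lemma weight_max_attained x0 : S x0 -> 0 < w x0 ->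
  exists2 xM, S xM & forall y, S y -> w y <= w xM.
Proof.
move=> Sx0 wx0_gt0.
have /finite_seqP [s s_level] := finite_superlevel wx0_gt0.
have x0s : [set` s] x0 by rewrite -s_level.
have s_neq0 : s != [::] by case: s x0s {s_level}.
have [xM xMs xM_max] := seq_argmax w s_neq0.
have xM_level : [set` s] xM := xMs.
rewrite -s_level in xM_level; case: xM_level => SxM wx0_le.
exists xM => // y Sy; have [wx0_le_wy|wy_lt] := leP (w x0) (w y).
  by apply: xM_max; have : [set` s] y by rewrite -s_level.
exact/ltW/(lt_le_trans wy_lt).
Qed.

Variables (k : nat) (p : 'I_k -> R) (f g : 'I_k -> T -> T).
Hypothesis p_gt0 : forall i, 0 < p i.
Hypothesis p_sum1 : \sum_i p i = 1.
Hypothesis g_S : forall i x, S x -> S (g i x).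
Hypothesis f_g : forall i x, S x -> f i (g i x) = x.
Hypothesis w_mean : forall x, S x -> w x = \sum_i p i * w (g i x).

Lemma finite_invariant_set x0 : S x0 -> 0 < w x0 ->
  exists s : seq T,
    [/\ s != [::], [set` s] `<=` S & forall i x, x \in s -> f i x \in s].
Proof.
move=> Sx0 wx0_gt0.
have [xM SxM xM_max] := weight_max_attained Sx0 wx0_gt0.
(* The superlevel set at the maximal weight is the set of maximisers. *)
have /finite_seqP [s s_level] :=
  finite_superlevel (lt_le_trans wx0_gt0 (xM_max _ Sx0)).
have s_max x : x \in s -> S x /\ w x = w xM.
  move=> xs; have : [set` s] x := xs.
  rewrite -s_level => -[Sx wxM_le].
  by split => //; apply/eqP; rewrite eq_le xM_max.
have max_s x : S x -> w x = w xM -> x \in s.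
  move=> Sx wx; suff : [set` s] x by [].
  by rewrite -s_level; split; rewrite // wx.
have g_s i : {subset map (g i) s <= s}.
  move=> _ /mapP [x /s_max [Sx wx] ->]; apply: max_s; first exact: g_S.
  rewrite -wx; apply: (convex_comb_eq_max (a := fun j => w (g j x)) p_gt0 p_sum1).
    by move=> j; rewrite wx; apply/xM_max/g_S.
  by rewrite -w_mean.
exists s; split.
- by apply: contraTneq (max_s _ SxM erefl) => ->.
- by move=> x /s_max [].
move=> i x xs.
have g_inj : {in s &, injective (g i)}.
  by move=> y z /s_max [Sy _] /s_max [Sz _] gyz; rewrite -(f_g i Sy) gyz f_g.
have /mapP [y ys ->] := sub_map_inj_in g_inj (g_s i) xs.
by rewrite f_g //; case: (s_max y ys).
Qed.
End MaximalWeights.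

Section Atoms.
Context d (T : measurableType d) (R : realType) (m : probability T R).
Hypothesis set1_meas : forall x : T, measurable [set x].

Definition atom (x : T) : R := fine (m [set x]).

Lemma atomE x : m [set x] = (atom x)%:E.
Proof.
rewrite fineK // ge0_fin_numE //.
by rewrite (le_lt_trans (probability_le1 m (set1_meas x))) ?ltry.
Qed.

Lemma atom_ge0 x : 0 <= atom x.
Proof. exact: fine_ge0. Qed.

Lemma atom_fsum_le1 (B : {fset T}) : \sum_(x <- B) atom x <= 1.
Proof.
have B_fin : finite_set [set` B] by [].
have mB : m [set` B] = (\sum_(x <- B) atom x)%:E.
  rewrite -(fsbig_setU_set1 B_fin) measure_fsbig //.
  - rewrite fsbig_finite // set_fsetK -sumEFin.
    by apply: eq_bigr => x _; exact: atomE.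
  - by move=> x y _ _ [z [/= -> ->]].
have B_meas : measurable [set` B].
  by rewrite -(fsbig_setU_set1 B_fin) fsbig_finite //; apply: bigsetU_measurable.
by rewrite -lee_fin -mB probability_le1.
Qed.
End Atoms.

Lemma BorelRn_measurable_set1 (R : realType) (n : nat) (x : Rn1 R n) :
  measurable ([set x] : set (BorelRn R n)).
Proof.
rewrite -(setCK [set x]); apply: measurableC; apply: sub_gen_smallest.
apply: closed_openC; apply: accessible_closed_set1; apply: hausdorff_accessible.
exact: norm_hausdorff.
Qed.

Lemma sph_diffeo_inverses (R : realType) (n k : nat)
    (f : 'I_k -> Rn1 R n -> Rn1 R n) :
  (forall i, sph_diffeo (f i)) -> exists g : 'I_k -> Rn1 R n -> Rn1 R n,
    [/\ forall i x, unit_sph R n x -> unit_sph R n (g i x),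
        forall i x, unit_sph R n x -> g i (f i x) = x &
        forall i x, unit_sph R n x -> f i (g i x) = x].
Proof.
move=> f_diffeo; have /choice [g g_inv] := fun i => (f_diffeo i).2.
by exists g; split=> i; have [[g_S _] gf fg] := g_inv i.
Qed.

Lemma stationary_atom_mean (R : realType) (n k : nat)
    (f g : 'I_k -> Rn1 R n -> Rn1 R n) (p : 'I_k -> R)
    (m : probability (BorelRn R n) R) :
  stationary f p m ->
  (forall i x, unit_sph R n x -> unit_sph R n (g i x)) ->
  (forall i x, unit_sph R n x -> g i (f i x) = x) ->
  (forall i x, unit_sph R n x -> f i (g i x) = x) ->
  forall x, unit_sph R n x -> atom m x = \sum_i p i * atom m (g i x).
Proof.
move=> [_ m_stat] g_S gf fg x Sx.
have preimage_x i : unit_sph R n `&` f i @^-1` [set x] = [set g i x].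
  apply/seteqP; split => [y [Sy /= <-]|_ ->]; first by rewrite /= gf.
  by split; [exact: g_S | exact: fg].
have set1_meas := @BorelRn_measurable_set1 R n.
apply: EFin_inj; rewrite -(atomE m set1_meas) (m_stat _ (set1_meas x)) -sumEFin.
by apply: eq_bigr => i _; rewrite preimage_x (atomE m set1_meas).
Qed.

Lemma unit_sph_infinite (R : realType) (n : nat) :
  (1 <= n)%N -> infinite_set (unit_sph R n).
Proof.
case: n => // n _; apply/infiniteP/pcard_leP/injfunPex.
pose a (t : nat) : R := t.+1%:R^-1.
have a_ge0 t : 0 <= a t by rewrite invr_ge0.
have a_le1 t : a t <= 1 by rewrite invf_le1 // ler1n.
pose pt t : Rn1 R n.+1 := \row_(j < n.+2)
  if j == 0 :> nat then a t else if j == 1 :> nat then Num.sqrt (1 - a t ^+ 2) else 0.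
exists pt => [t _|t u _ _].
  rewrite /= /unit_sph /dotv /= !big_ord_recl big1 => [|j _]; last by rewrite !mxE mul0r.
  rewrite !mxE /= -!expr2 sqr_sqrtr ?subr_ge0 ?exprn_ile1 //.
  by rewrite addr0 addrC subrK.
move/(congr1 (fun v : Rn1 R n.+1 => v ord0 ord0)); rewrite !mxE /=.
by move/invr_inj/eqP; rewrite eqr_nat => /eqP [].
Qed.

Section IFSOrbits.
Variables (R : realType) (n k : nat) (f : 'I_k -> Rn1 R n -> Rn1 R n).
Variable s : seq (Rn1 R n).
Hypothesis f_s : forall i x, x \in s -> f i x \in s.

Lemma ifs_orbit_mem x word j : x \in s -> ifs_orbit f x word j \in s.
Proof. by move=> xs; elim: j => //= j; apply: f_s. Qed.

Lemma ifs_minimal_sub_invariant y : ifs_minimal f ->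
  unit_sph R n y -> y \in s -> unit_sph R n `<=` [set` s].
Proof.
move=> f_min Sy ys; have [word orbit_dense] := f_min y Sy.
have s_closed : closed [set` s].
  apply: (accessible_finite_set_closed (T := Rn1 R n)).1; last exact: finite_seq.
  by apply: hausdorff_accessible; exact: norm_hausdorff.
rewrite ((closure_id _).1 s_closed); apply: subset_trans orbit_dense _.
by apply: closureS => _ [j _ <-]; exact: ifs_orbit_mem.
Qed.
End IFSOrbits.

Theorem lemma3p4 (R : realType) (n k : nat) (f : 'I_k -> 'rV[R]_(n.+1) -> 'rV[R]_(n.+1))
  (p : 'I_k -> R) (m : probability (BorelRn R n) R)
  (i0 : 'I_k) (P0 Q0 : 'rV[R]_(n.+1)) :
  (1 <= n)%N -> (2 <= k)%N ->
  (forall i, sph_diffeo (f i)) ->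
  ifs_minimal f ->
  north_south (f i0) P0 Q0 ->
  (forall i, 0 < p i < 1) -> \sum_(i < k) p i = 1 ->
  stationary f p m ->
  m [set P0] = 0%E.
Proof.
move=> n_ge1 _ f_diffeo f_min [_ [SP0 _ _] _ _] p_range p_sum1 m_stat.
have [g [g_S gf fg]] := sph_diffeo_inverses f_diffeo.
have set1_meas := @BorelRn_measurable_set1 R n.
apply/eqP/negPn/negP => mP0_neq0.
have atom_P0_gt0 : 0 < atom m P0.
  rewrite lt_def atom_ge0 andbT; apply: contra mP0_neq0 => /eqP atom_P0.
  by rewrite (atomE m set1_meas) atom_P0.
have [s [s_neq0 s_S f_s]] := finite_invariant_set
  (fun B _ => atom_fsum_le1 m set1_meas B) (fun i => (andP (p_range i)).1) p_sum1
  g_S fg (stationary_atom_mean m_stat g_S gf fg) SP0 atom_P0_gt0.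
have [y ys] : exists y, y \in s.
  by case: s s_neq0 {s_S f_s} => // y s' _; exists y; exact: mem_head.
apply: (unit_sph_infinite (R := R) n_ge1); apply: sub_finite_set (finite_seq s).
exact: (ifs_minimal_sub_invariant (s := s) f_s f_min (s_S y ys) ys).
Qed.
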